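(* Let $\mathcal{A}=(A_n)_{n\in\mathbb{N}}$ be a symmetric van Hove averaging sequence in $\mathbb{R}^d$, let $f\in C_{\mathsf{u}}(\mathbb{R}^d)$, let $k\in\mathbb{R}^d$ and $\chi_k(x)=e^{2\pi i kx}$. Then, with respect to $\mathcal{A}$, the following are equivalent: (1) the Fourier–Bohr coefficient $c_f(k)$ exists; (2) the Eberlein convolution $\chi_k\circledast f$ exists; (3) there is some $x\in\mathbb{R}^d$ such that $\lim_{n\to\infty}\frac{1}{\mathrm{vol}(A_n)}\int_{A_n}\chi_k(x-t)f(t)\,\mathrm{d}t$ exists. Moreover, if $c_f(k)$ exists, then $(\chi_k\circledast f)(x)=\chi_k(x)\,c_f(k)$ for all $x\in\mathbb{R}^d$.
   Context: $C_{\mathsf{u}}(\mathbb{R}^d)$ is the space of bounded uniformly continuous complex functions on $\mathbb{R}^d$. An averaging sequence is a sequence $(A_n)$ of compact sets with $A_n\subset A_{n+1}^{\circ}$ and $\bigcup_nA_n=\mathbb{R}^d$; it is symmetric if $A_n=-A_n$ for all $n$, and van Hove if $\lim_n\mathrm{vol}(\partial^KA_n)/\mathrm{vol}(A_n)=0$ for every compact $K$, where $\partial^K C=((C+K)\setminus C^{\circ})\cup((\overline{\mathbb{R}^d\setminus C}-K)\cap C)$. The Eberlein convolution of $g,f\in C_{\mathsf{u}}(\mathbb{R}^d)$ along $\mathcal{A}$ is $(g\circledast f)(x)=\lim_n\frac{1}{\mathrm{vol}(A_n)}\int_{A_n}g(x-t)f(t)\,\mathrm{d}t$, said to exist if the limit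 exists for every $x$. The Fourier–Bohr coefficient of $f$ at $k$ with respect to $\mathcal{A}$ is $c_f(k)=\lim_n\frac{1}{\mathrm{vol}(A_n)}\int_{A_n}e^{-2\pi i kx}f(x)\,\mathrm{d}x$, when the limit exists. *)

From HB Require Import structures.
From mathcomp Require Import all_boot all_order all_algebra.
From mathcomp Require Import all_classical all_reals all_analysis.
From mathcomp Require Import complex.
Import Order.TTheory GRing.Theory Num.Theory.
Import ComplexField.
Import numFieldNormedType.Exports numFieldTopology.Exports.

Set Implicit Arguments.
Unset Strict Implicit.
Unset Printing Implicit Defensive.

Local Open Scope classical_set_scope.
Local Open Scope ring_scope.
Local Open Scope complex_scope.

(* R^(n+1) is first built as the iterated product measurable space           *)
(* ((R * R) * ... ) * R carrying the iterated library product measure of     *)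
(* the library's 1-dimensional Lebesgue measure; it is then transported to   *)
(* the row vectors 'rV[R]_(n+1) through the coordinate bijection toRV.       *)

Definition dispOf {d : measure_display} (T : measurableType d) := d.

Fixpoint dispR (R : realType) (n : nat) : measure_display :=
  match n with
  | 0 => dispOf (measurableTypeR R : measurableType _)
  | n.+1 => measure_prod_display (dispR R n, dispOf (measurableTypeR R : measurableType _))
  end.

Fixpoint mR (R : realType) (n : nat) : measurableType (dispR R n) :=
  match n return measurableType (dispR R n) with
  | 0 => measurableTypeR R
  | n.+1 => ((mR R n) * measurableTypeR R)%type
  end.

Fixpoint lebR (R : realType) (n : nat) : {measure set (mR R n) -> \bar R} :=
  match n return {measure set (mR R n) -> \bar R} with
  | 0 => (@lebesgue_measure R : {measure set _ -> \bar R})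
  | n.+1 => (((lebR R n) \x (@lebesgue_measure R))%E : {measure set _ -> \bar R})
  end.

Fixpoint coordR (R : realType) (n : nat) : mR R n -> nat -> R :=
  match n return mR R n -> nat -> R with
  | 0 => fun x _ => x
  | n.+1 => fun p i => if (i <= n)%N then coordR p.1 i else p.2
  end.

Definition toRV (R : realType) (n : nat) (x : mR R n) : 'rV[R]_n.+1 :=
  \row_(j < n.+1) coordR x j.

(* d-dimensional Lebesgue measure on 'rV[R]_d (for d = 0, R^0 is a point and
   its Lebesgue measure is the unit point mass). *)
Definition vol (R : realType) (d : nat) : set 'rV[R]_d -> \bar R :=
  match d return set 'rV[R]_d -> \bar R with
  | 0 => fun A => if `[< A (0 : 'rV[R]_0) >] then 1%E else 0%E
  | n.+1 => fun A => lebR R n (@toRV R n @^-1` A)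
  end.

Definition Rint (R : realType) (d : nat) : set 'rV[R]_d -> ('rV[R]_d -> R) -> R :=
  match d return set 'rV[R]_d -> ('rV[R]_d -> R) -> R with
  | 0 => fun A g => if `[< A 0 >] then g 0 else 0
  | n.+1 => fun A g => Rintegral (lebR R n) (@toRV R n @^-1` A) (g \o @toRV R n)
  end.

Definition Cint (R : realType) (d : nat) (A : set 'rV[R]_d) (g : 'rV[R]_d -> R[i])
  : R[i] :=
  (Rint A (fun x => complex.Re (g x))) +i* (Rint A (fun x => complex.Im (g x))).

Definition avg (R : realType) (d : nat) (A : set 'rV[R]_d) (g : 'rV[R]_d -> R[i])
  : R[i] :=
  ((fine (vol A))%:C)^-1 * Cint A g.

Definition averaging_seq (R : realType) (d : nat) (A : nat -> set 'rV[R]_d) : Prop :=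
  (forall n, compact (A n)) /\
  (forall n, A n `<=` interior (A n.+1)) /\
  \bigcup_n A n = setT.

Definition symmetric_seq (R : realType) (d : nat) (A : nat -> set 'rV[R]_d) : Prop :=
  forall n, [set - x | x in A n] = A n.

Definition Kboundary (R : realType) (d : nat) (K C : set 'rV[R]_d) : set 'rV[R]_d :=
  ([set c + k | c in C & k in K] `\` interior C) `|`
  ([set y - k | y in closure (~` C) & k in K] `&` C).

Definition van_Hove (R : realType) (d : nat) (A : nat -> set 'rV[R]_d) : Prop :=
  forall K : set 'rV[R]_d, compact K ->
    (fun n => fine (vol (Kboundary K (A n))) / fine (vol (A n))) @ \oo --> (0 : R).

Definition Cu (R : realType) (d : nat) (f : 'rV[R]_d -> R[i]) : Prop :=
  (exists M : R, forall x, Normc.normc (f x) <= M) /\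
  unif_continuous (f : 'rV[R]_d -> R[i]^o).

Definition dotp (R : realType) (d : nat) (k x : 'rV[R]_d) : R :=
  \sum_(j < d) k 0 j * x 0 j.

Definition e2pi (R : realType) (t : R) : R[i] :=
  (cos (2 * pi * t)) +i* (sin (2 * pi * t)).

Definition chi (R : realType) (d : nat) (k : 'rV[R]_d) (x : 'rV[R]_d) : R[i] :=
  e2pi (dotp k x).

Definition is_FB_coeff (R : realType) (d : nat) (A : nat -> set 'rV[R]_d)
  (f : 'rV[R]_d -> R[i]) (k : 'rV[R]_d) (c : R[i]) : Prop :=
  ((fun n => avg (A n) (fun x => e2pi (- dotp k x) * f x)) : nat -> R[i]^o)
    @ \oo --> (c : R[i]^o).

Definition FB_coeff_exists (R : realType) (d : nat) (A : nat -> set 'rV[R]_d)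
  (f : 'rV[R]_d -> R[i]) (k : 'rV[R]_d) : Prop :=
  exists c, is_FB_coeff A f k c.

Definition is_eberlein_at (R : realType) (d : nat) (A : nat -> set 'rV[R]_d)
  (g f : 'rV[R]_d -> R[i]) (x : 'rV[R]_d) (v : R[i]) : Prop :=
  ((fun n => avg (A n) (fun t => g (x - t) * f t)) : nat -> R[i]^o)
    @ \oo --> (v : R[i]^o).

Definition eberlein_exists_at (R : realType) (d : nat) (A : nat -> set 'rV[R]_d)
  (g f : 'rV[R]_d -> R[i]) (x : 'rV[R]_d) : Prop :=
  exists v, is_eberlein_at A g f x v.

Definition eberlein_exists (R : realType) (d : nat) (A : nat -> set 'rV[R]_d)
  (g f : 'rV[R]_d -> R[i]) : Prop :=
  forall x, eberlein_exists_at A g f x.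

(* Since chi_k(x - t) = chi_k(x) e^{-2 pi i k t}, the average defining the
   Eberlein convolution at x over A_n is chi_k(x) times the average defining
   c_f(k) over A_n, by linearity of the integral; as chi_k(x) <> 0, one limit
   exists iff the other does.  Linearity needs the integrands to be
   integrable, which holds because they are bounded and continuous and each
   A_n is compact. *)
From Pilot Require Import Defs.
From HB Require Import structures.
From mathcomp Require Import all_boot all_order all_algebra.
From mathcomp Require Import all_classical all_reals all_analysis.
From mathcomp Require Import complex measurable_realfun.
From mathcomp Require Import ring lra.
Import Order.TTheory GRing.Theory Num.Theory.
Import ComplexField.
Import numFieldNormedType.Exports numFieldTopology.Exports.
Local Open Scope classical_set_scope.
Local Open Scope ring_scope.

Set Implicit Arguments.
Unset Strict Implicit.
Unset Printing Implicit Defensive.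

Lemma cvgMlE (K : numFieldType) (T : Type) (F : set_system T) (FF : Filter F)
    (u : T -> K) (a b : K) : a != 0 ->
  (a * u x @[x --> F] --> a * b) <-> (u x @[x --> F] --> b).
Proof.
move=> a0; split => [|/cvgMl_tmp //] /(cvgMl_tmp (a := a^-1)).
by rewrite mulKf //; under eq_fun do rewrite mulKf //.
Qed.

Section LebesgueRV.
Variable R : realType.

Lemma coordRS n (q : mR R n) y j :
  coordR (n := n.+1) (q, y) j = if (j <= n)%N then coordR q j else y.
Proof. by []. Qed.

Definition boxR n (a b : nat -> R) : set (mR R n) :=
  [set q | forall j, (j <= n)%N -> a j < coordR q j < b j].
Arguments boxR : clear implicits.

Lemma boxR0 a b : boxR 0 a b = `]a 0%N, b 0%N[%classic.
Proof.
apply/seteqP; split => x /=; first by move/(_ 0%N (leqnn _)); rewrite in_itv.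
by rewrite in_itv /= => h j; rewrite leqn0 => /eqP ->.
Qed.

Lemma boxRS n a b : boxR n.+1 a b = boxR n a b `*` `]a n.+1, b n.+1[%classic.
Proof.
apply/seteqP; split => -[q y] /=.
  move=> h; split.
    by move=> j jn; have := h j (leqW jn); rewrite coordRS jn.
  by have := h n.+1 (leqnn _); rewrite coordRS ltnn in_itv.
rewrite in_itv /= => -[h1 h2] j; rewrite coordRS.
case: ifP => [jn _|jn jn1]; first exact: h1.
by have -> : j = n.+1 by apply/eqP; rewrite eqn_leq jn1 ltnNge jn.
Qed.

Lemma measurable_boxR n a b : measurable (boxR n a b).
Proof.
elim: n => [|n IH]; first by rewrite boxR0; exact: measurable_itv.
by rewrite boxRS; apply: measurableX => //; exact: measurable_itv.
Qed.

Lemma lebR_boxR_lty n a b : (lebR R n (boxR n a b) < +oo)%E.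
Proof.
have itv_lty (x y : R) : (@lebesgue_measure R `]x, y[%classic < +oo)%E.
  by rewrite lebesgue_measure_itv; case: ifP => _ //; exact: ltry.
elim: n => [|n IH]; first by rewrite boxR0; exact: itv_lty.
rewrite boxRS /= product_measure1E;
  [|exact: measurable_boxR|exact: measurable_itv].
apply: lte_mul_pinfty; [exact: measure_ge0| |exact: itv_lty].
rewrite ge0_fin_numE ?IH //; exact: measure_ge0.
Qed.

Lemma toRVE n (q : mR R n) (j : 'I_n.+1) : toRV q 0 j = coordR q j.
Proof. by rewrite mxE. Qed.

(* Open cubes with rational centre [sr.1] and rational half-width [sr.2]:
   countably many, and they form a base of the topology of R^(n+1). *)
Definition ratboxR n (sr : seq rat * rat) : set (mR R n) :=
  boxR n (fun j => ratr (nth 0 sr.1 j) - ratr sr.2)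
         (fun j => ratr (nth 0 sr.1 j) + ratr sr.2).
Arguments ratboxR : clear implicits.

Lemma open_toRV_ratboxR n (U : set 'rV[R]_n.+1) q : open U -> U (toRV q) ->
  exists sr, ratboxR n sr q /\ ratboxR n sr `<=` @toRV R n @^-1` U.
Proof.
move=> oU Uq; have /nbhs_ballP[e e0 sub] : nbhs (toRV q) U by exact: oU.
have [r] := @rat_in_itvoo R 0 (e / 2) (divr_gt0 e0 (ltr0Sn _ 1)).
rewrite in_itv /= => /andP[r0 re].
have near_q j : exists s : rat,
    ratr s \in `](coordR q j - ratr r), (coordR q j + ratr r)[.
  by apply: rat_in_itvoo; lra.
have [phi phiP] := boolp.choice near_q.
exists (mkseq phi n.+1, r); split.
  move=> j jn; rewrite /= nth_mkseq //.
  by move: (phiP j); rewrite in_itv /= => /andP[? ?]; apply/andP; split; lra.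
move=> q' q'_box; apply: sub; split => // i j; rewrite ord1 !toRVE.
have jn : (j <= n)%N by rewrite -ltnS.
move: (phiP j) (q'_box j jn); rewrite in_itv /= nth_mkseq //.
move=> /andP[? ?] /andP[? ?]; rewrite /ball /= ltr_norml.
by apply/andP; split; lra.
Qed.

Lemma measurable_toRV_open n (U : set 'rV[R]_n.+1) : open U ->
  measurable (@toRV R n @^-1` U).
Proof.
move=> oU.
pose F sr :=
  if `[< ratboxR n sr `<=` @toRV R n @^-1` U >] then ratboxR n sr else set0.
have -> : @toRV R n @^-1` U = \bigcup_sr F sr.
  apply/seteqP; split => [q Uq|q [sr _]]; last first.
    by rewrite /F; case: asboolP => [sub|_] //; exact: sub.
  have [sr [q_sr sub]] := open_toRV_ratboxR oU Uq.
  by exists sr => //; rewrite /F; case: asboolP.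
apply: countable_bigcupT_measurable; first exact: countableP.
by move=> sr; rewrite /F; case: asboolP => _; [exact: measurable_boxR|].
Qed.

Lemma measurable_toRV_closed n (S : set 'rV[R]_n.+1) : closed S ->
  measurable (@toRV R n @^-1` S).
Proof.
move=> cS; rewrite -[S]setCK preimage_setC; apply: measurableC.
exact: (measurable_toRV_open (closed_openC cS)).
Qed.

Lemma measurable_toRV_compact n (S : set 'rV[R]_n.+1) : compact S ->
  measurable (@toRV R n @^-1` S).
Proof.
by move=> cS; apply: measurable_toRV_closed; exact: compact_closed cS.
Qed.

Lemma measurable_fun_toRV n (h : 'rV[R]_n.+1 -> R) : continuous h ->
  measurable_fun setT (h \o @toRV R n).
Proof.
move=> /continuousP ch; apply: (measurability _ (RGenOpens.measurableE R)).
move=> _ [_ [x [y ->]] <-]; rewrite setTI.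
exact: (measurable_toRV_open (ch _ (interval_open _ _))).
Qed.

Lemma lebR_toRV_compact_lty n (S : set 'rV[R]_n.+1) : compact S ->
  (lebR R n (@toRV R n @^-1` S) < +oo)%E.
Proof.
move=> cS; have [M [_ hM]] := compact_bounded cS.
pose B := `|M| + 1.
have SB : S `<=` [set v | `|v| <= B].
  by apply: hM; rewrite ltr_pwDr ?ler_norm.
apply: le_lt_trans (lebR_boxR_lty n (fun=> - (B + 1)) (fun=> B + 1)).
apply: le_measure; rewrite ?inE.
- exact: measurable_toRV_compact.
- exact: measurable_boxR.
move=> q /SB /= qB j jn.
have : `|toRV q 0 (@Ordinal n.+1 j jn)| <= B.
  apply: le_trans qB; rewrite [leRHS]/Num.norm /= mx_normrE.
  exact: (le_bigmax _ (fun ij : 'I_1 * 'I_n.+1 => `|toRV q ij.1 ij.2|) (0, _)).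
by rewrite toRVE ler_norml => /andP[? ?]; apply/andP; split; lra.
Qed.

End LebesgueRV.

Section ComplexParts.
Variable R : realType.

Lemma normc_subr_ge_ReIm (z w : R[i]) :
  `|complex.Re z - complex.Re w| <= Normc.normc (z - w) /\
  `|complex.Im z - complex.Im w| <= Normc.normc (z - w).
Proof.
case: z w => [a b] [c e] /=.
by split; rewrite -sqrtr_sqr ler_wsqrtr // ?lerDl ?lerDr sqr_ge0.
Qed.

Lemma unif_continuous_ReIm (U : uniformType) (f : U -> R[i]^o) :
  unif_continuous f ->
  continuous (fun t => complex.Re (f t)) /\
  continuous (fun t => complex.Im (f t)).
Proof.
move=> uf.
have near_x x e : 0 < e -> \forall t \near x, Normc.normc (f x - f t) < e.
  move=> e0.
  have ent_e : entourage [set zw : R[i]^o * R[i]^o | ball zw.1 e%:C%C zw.2].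
    by rewrite -entourage_ballE; exists e%:C%C => //=; rewrite ltcR.
  apply: filterS (nbhs_entourage x (uf _ ent_e)) => t /xsectionP /=.
  by rewrite /ball /= [`|_|]/Num.norm /= ltcR.
split => x; apply/cvgrPdist_lt => e /(near_x x); apply: filterS => t;
  have [hRe hIm] := normc_subr_ge_ReIm (f x) (f t).
- exact: le_lt_trans hRe.
- exact: le_lt_trans hIm.
Qed.

End ComplexParts.

Section BoundedContinuous.
Variables (R : realType) (d : nat).
Implicit Types (h : 'rV[R]_d -> R) (g : 'rV[R]_d -> R[i]).

Definition bounded_continuous h :=
  continuous h /\ exists M, forall x, `|h x| <= M.

Lemma bounded_continuousD h1 h2 : bounded_continuous h1 ->
  bounded_continuous h2 -> bounded_continuous (fun t => h1 t + h2 t).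
Proof.
move=> [c1 [M1 b1]] [c2 [M2 b2]].
split; first by move=> x; exact: (continuousD (c1 x) (c2 x)).
by exists (M1 + M2) => x; apply: le_trans (ler_normD _ _) _; exact: lerD.
Qed.

Lemma bounded_continuousN h : bounded_continuous h ->
  bounded_continuous (fun t => - h t).
Proof.
move=> [c [M b]]; split; first by move=> x; exact: (continuousN (c x)).
by exists M => x; rewrite normrN.
Qed.

Lemma bounded_continuousM h1 h2 : bounded_continuous h1 ->
  bounded_continuous h2 -> bounded_continuous (fun t => h1 t * h2 t).
Proof.
move=> [c1 [M1 b1]] [c2 [M2 b2]].
split; first by move=> x; exact: (continuousM (c1 x) (c2 x)).
by exists (M1 * M2) => x; rewrite normrM ler_pM.
Qed.

Lemma continuous_dotp k : continuous (dotp k : 'rV[R]_d -> R).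
Proof.
move=> x; have nbhs_x := @mx_nbhs_filter 1 d R x.
apply: (@cvg_big _ _ +%R 0 xpredT add_continuous _ _ _ _ _ nbhs_x) => j _.
by apply: (@cvgM _ _ _ nbhs_x); [exact: cvg_cst|exact: coord_continuous].
Qed.

Lemma bounded_continuous_cos h : continuous h ->
  bounded_continuous (fun t => cos (h t)).
Proof.
move=> ch; split; last by exists 1 => x; exact: cos_max.
by move=> x; apply: continuous_comp; [exact: ch|exact: continuous_cos].
Qed.

Lemma bounded_continuous_sin h : continuous h ->
  bounded_continuous (fun t => sin (h t)).
Proof.
move=> ch; split; last by exists 1 => x; exact: sin_max.
by move=> x; apply: continuous_comp; [exact: ch|exact: continuous_sin].
Qed.

Definition bounded_continuousC g :=
  bounded_continuous (fun t => complex.Re (g t)) /\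
  bounded_continuous (fun t => complex.Im (g t)).

Lemma bounded_continuousCM g1 g2 : bounded_continuousC g1 ->
  bounded_continuousC g2 -> bounded_continuousC (fun t => g1 t * g2 t).
Proof.
move=> [r1 i1] [r2 i2].
have eRe : (fun t => complex.Re (g1 t * g2 t)) = (fun t =>
    complex.Re (g1 t) * complex.Re (g2 t) +
    - (complex.Im (g1 t) * complex.Im (g2 t))).
  by apply: funext => t; case: (g1 t) (g2 t) => [? ?] [? ?].
have eIm : (fun t => complex.Im (g1 t * g2 t)) = (fun t =>
    complex.Re (g1 t) * complex.Im (g2 t) +
    complex.Im (g1 t) * complex.Re (g2 t)).
  by apply: funext => t; case: (g1 t) (g2 t) => [? ?] [? ?].
rewrite /bounded_continuousC eRe eIm.
split; apply: bounded_continuousD; do ?apply: bounded_continuousN;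
  exact: bounded_continuousM.
Qed.

Lemma bounded_continuousC_e2pi h : continuous h ->
  bounded_continuousC (fun t => e2pi (h t)).
Proof.
move=> ch; have c2pi : continuous (fun t => 2 * pi * h t).
  by move=> x; apply: continuousM (ch x); exact: cst_continuous.
by split; [exact: bounded_continuous_cos | exact: bounded_continuous_sin].
Qed.

Lemma bounded_continuousC_Cu (f : 'rV[R]_d -> R[i]) :
  Cu f -> bounded_continuousC f.
Proof.
move=> [[M hM] uf]; have [cRe cIm] := unif_continuous_ReIm uf.
split; split => //; exists M => x;
  have [bRe bIm] := normc_subr_ge_ReIm (f x) 0;
  rewrite /= !subr0 in bRe bIm.
- exact: le_trans bRe (hM x).
- exact: le_trans bIm (hM x).
Qed.

End BoundedContinuous.

Section Averages.
Variable R : realType.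

Lemma integrable_bounded_continuous n (S : set 'rV[R]_n.+1)
    (h : 'rV[R]_n.+1 -> R) :
  compact S -> bounded_continuous h ->
  (lebR R n).-integrable (@toRV R n @^-1` S) (EFin \o (h \o @toRV R n)).
Proof.
move=> cS [ch [M hM]]; apply: measurable_bounded_integrable.
- exact: measurable_toRV_compact.
- exact: lebR_toRV_compact_lty.
- exact: measurable_funS (subsetT _) (measurable_fun_toRV ch).
- exists M; split; first exact: num_real.
  by move=> y My x _; apply: le_trans (hM _) _; exact: ltW.
Qed.

Lemma Rint_linear d (S : set 'rV[R]_d) (h1 h2 : 'rV[R]_d -> R) (a b : R) :
  compact S -> bounded_continuous h1 -> bounded_continuous h2 ->
  Defs.Rint S (fun t => a * h1 t + b * h2 t) =
  a * Defs.Rint S h1 + b * Defs.Rint S h2.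
Proof.
case: d S h1 h2 => [|n] S h1 h2 cS bc1 bc2 /=.
  by case: ifP => _ //; rewrite !mulr0 addr0.
have mS := measurable_toRV_compact cS.
have i1 := integrable_bounded_continuous cS bc1.
have i2 := integrable_bounded_continuous cS bc2.
rewrite [_ \o _](_ : _ =
  fun q => a * (h1 \o @toRV R n) q + b * (h2 \o @toRV R n) q) //.
rewrite RintegralD ?RintegralZl //.
- exact: integrableZl mS a _ i1.
- exact: integrableZl mS b _ i2.
Qed.

Lemma avgZ d (S : set 'rV[R]_d) (g : 'rV[R]_d -> R[i]) (z : R[i]) :
  compact S -> bounded_continuousC g -> avg S (fun t => z * g t) = z * avg S g.
Proof.
case: z => a b cS [bRe bIm]; rewrite /avg mulrCA; congr (_ * _); rewrite /Cint.
have -> : (fun t => complex.Re ((a +i* b)%C * g t)) =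
    (fun t => a * complex.Re (g t) + (- b) * complex.Im (g t)).
  by apply: funext => t; case: (g t) => u w /=; rewrite mulNr.
have -> : (fun t => complex.Im ((a +i* b)%C * g t)) =
    (fun t => a * complex.Im (g t) + b * complex.Re (g t)).
  by apply: funext => t; case: (g t).
by rewrite !Rint_linear // mulNr.
Qed.

End Averages.

Section Characters.
Variable R : realType.

Lemma e2piD (u v : R) : e2pi (u + v) = e2pi u * e2pi v.
Proof.
rewrite /e2pi mulrDr cosD sinD; apply/eqP; rewrite eq_complex /=.
by apply/andP; split; apply/eqP; ring.
Qed.

Lemma e2pi_neq0 (u : R) : e2pi u != 0.
Proof.
apply/eqP; rewrite /e2pi => -[cos0 sin0].
have := cos2Dsin2 (2 * pi * u); rewrite cos0 sin0 expr0n addr0 => /eqP.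
by rewrite eq_sym oner_eq0.
Qed.

Lemma dotpB d (k x t : 'rV[R]_d) : dotp k (x - t) = dotp k x - dotp k t.
Proof.
by rewrite /dotp -sumrB; apply: eq_bigr => j _; rewrite !mxE mulrBr.
Qed.

Lemma chiB d (k x t : 'rV[R]_d) : chi k (x - t) = chi k x * e2pi (- dotp k t).
Proof. by rewrite /chi dotpB e2piD. Qed.

End Characters.

Section EberleinCharacter.
Variables (R : realType) (d : nat) (f : 'rV[R]_d -> R[i]) (k : 'rV[R]_d).
Hypothesis hf : Cu f.

Lemma avg_chi_conv (S : set 'rV[R]_d) x : compact S ->
  avg S (fun t => chi k (x - t) * f t) =
  chi k x * avg S (fun t => e2pi (- dotp k t) * f t).
Proof.
move=> cS; rewrite -avgZ //.
  by congr avg; apply: funext => t; rewrite chiB mulrA.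
apply: bounded_continuousCM (bounded_continuousC_Cu hf).
apply: bounded_continuousC_e2pi => y.
by apply: continuousN; exact: continuous_dotp.
Qed.

Lemma is_eberlein_chiE (A : nat -> set 'rV[R]_d) x c :
  (forall n, compact (A n)) ->
  is_eberlein_at A (chi k) f x (chi k x * c) <-> is_FB_coeff A f k c.
Proof.
move=> cA; rewrite /is_eberlein_at /is_FB_coeff.
under eq_fun do rewrite avg_chi_conv //.
by apply: cvgMlE; exact: e2pi_neq0.
Qed.

End EberleinCharacter.

Unset Implicit Arguments.
Set Strict Implicit.

Theorem lemma4p1 (R : realType) (d : nat) (A : nat -> set 'rV[R]_d)
  (hA : averaging_seq A) (hsym : symmetric_seq A) (hvH : van_Hove A)
  (f : 'rV[R]_d -> R[i]) (hf : Cu f) (k : 'rV[R]_d) :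
  (FB_coeff_exists A f k <-> eberlein_exists A (chi k) f) /\
  (eberlein_exists A (chi k) f <-> exists x, eberlein_exists_at A (chi k) f x) /\
  (forall c, is_FB_coeff A f k c ->
     forall x, is_eberlein_at A (chi k) f x (chi k x * c)).
Proof.
have [cA _] := hA.
have conv_FB x c := is_eberlein_chiE k hf x c cA.
have FB_of_conv x : eberlein_exists_at A (chi k) f x -> FB_coeff_exists A f k.
  move=> [v hv]; exists ((chi k x)^-1 * v); apply/(conv_FB x).
  by rewrite mulVKf ?e2pi_neq0.
have conv_of_FB : FB_coeff_exists A f k -> eberlein_exists A (chi k) f.
  by move=> [c hc] x; exists (chi k x * c); apply/conv_FB.
split; [split|split; [split|]] => //.
- by move/(_ 0); exact: FB_of_conv.
- by move=> h; exists 0.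
- by move=> [x /FB_of_conv]; exact: conv_of_FB.
- by move=> c hc x; apply/conv_FB.
Qed.
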